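(* Let $E$ be a Banach space over $\mathbb{K}$, $m,k\in\mathbb{N}$ with $k>1$, and suppose that there exists a surjective polynomial $R\in\mathcal{P}(^{mk}E;\ell_1)$. Then there exists a weak*-weak*-continuous operator $T\in\mathcal{L}(\mathcal{P}(^k\ell_1);\mathcal{P}(^{mk}E))$ such that $T\neq\Delta^1_kP$ for every $P\in\mathcal{P}(^mE;\ell_1)$.
   Context: Banach spaces are over $\mathbb{K}=\mathbb{R}$ or $\mathbb{C}$. $\mathcal{P}(^jX;Y)$ is the space of continuous $j$-homogeneous polynomials $X\to Y$, $\mathcal{P}(^jX)=\mathcal{P}(^jX;\mathbb{K})$, $\mathcal{L}(X;Y)$ the bounded linear operators. For $P\in\mathcal{P}(^mE;F)$, $\Delta^1_kP\colon\mathcal{P}(^kF)\to\mathcal{P}(^{mk}E)$ is $\Delta^1_kP(q)=q\circ P$. For a Banach space $X$ and $j\in\mathbb{N}$, $\widehat{\otimes}^{j,s}_\pi X$ is the completed $j$-fold symmetric projective tensor product, and for $q\in\mathcal{P}(^jX)$, $q_L\in(\widehat{\otimes}^{j,s}_\pi X)^*$ is the linearization with $q_L(x\otimes\cdots\otimes x)=q(x)$; $q\mapsto q_L$ is a topological isomorphism $\mathcal{P}(^jX)\to(\widehat{\otimes}^{j,s}_\pi X)^*$. The weak* topology on $\mathcal{P}(^jX)$ is the one induced via this isomorphism by the weak* topology of $(\widehat{\otimes}^{j,s}_\pi X)^*$. *)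

From HB Require Import structures.
From mathcomp Require Import all_boot all_order all_algebra.
From mathcomp Require Import all_classical all_reals all_analysis.
From mathcomp Require Import complex.
Set Implicit Arguments. Unset Strict Implicit. Unset Printing Implicit Defensive.
Import Order.TTheory GRing.Theory Num.Theory numFieldNormedType.Exports.
Local Open Scope ring_scope.

(* The scalar field: K = R (b = true) or K = C = R[i] (b = false). *)
Definition scalarK (R : realType) (b : bool) : numFieldType :=
  if b then (R : numFieldType) else ((R[i])%C : numFieldType).

Section Generic.
Variable K : numFieldType.

(* "||x||_1 <= c", i.e. sum_n |x n| <= c (all partial sums are <= c). *)
Definition l1_le (x : nat -> K) (c : K) : Prop :=
  forall N : nat, \sum_(n < N) `|x n| <= c.

Definition l1_pred : {pred (nat -> K^o)} := fun x => `[< exists c, l1_le x c >].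

Lemma l1_subproof : GRing.subsemimod_closed l1_pred.
Proof.
split; [split|].
- apply/asboolP; exists 0 => N; rewrite big1 // => i _; by rewrite normr0.
- move=> u v /asboolP[cu Hu] /asboolP[cv Hv]; apply/asboolP; exists (cu + cv) => N.
  apply: (le_trans _ (lerD (Hu N) (Hv N))); rewrite -big_split /=.
  by apply: ler_sum => i _; exact: ler_normD.
- move=> a u /asboolP[cu Hu]; apply/asboolP; exists (`|a| * cu) => N.
  have -> : \sum_(n < N) `|(a *: u) n| = `|a| * \sum_(n < N) `|u n|.
    rewrite mulr_sumr; apply: eq_bigr => i _.
    by rewrite /GRing.scale /= normrM.
  by apply: ler_wpM2l => //; exact: Hu.
Qed.

HB.instance Definition _ := GRing.isSubmodClosed.Build K (nat -> K^o) l1_pred l1_subproof.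

Record l1 := L1 { l1val : nat -> K^o; l1valP : l1val \in l1_pred }.
HB.instance Definition _ := [isSub for l1val].
HB.instance Definition _ := [Choice of l1 by <:].
HB.instance Definition _ := [SubChoice_isSubLmodule of l1 by <:].

Definition l1_norm_le (x : l1) (c : K) : Prop := l1_le (l1val x) c.

Definition norm_le (V : normedModType K) (x : V) (c : K) : Prop := `|x| <= c.
Definition scal_norm_le (x : K^o) (c : K) : Prop := `|(x : K)| <= c.

(* Continuous j-homogeneous polynomials between normed spaces, where a  *)
(* normed space is given by its "norm is at most" relation nle.        *)

Definition update (V : Type) (j : nat) (xs : 'I_j -> V) (i : 'I_j) (u : V) : 'I_j -> V :=
  fun l => if l == i then u else xs l.

Definition multilinear (V W : lmodType K) (j : nat) (A : ('I_j -> V) -> W) : Prop :=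
  forall (xs : 'I_j -> V) (i : 'I_j) (a : K) (u v : V),
    A (update xs i (a *: u + v)) = a *: A (update xs i u) + A (update xs i v).

Definition norm_continuous (V W : lmodType K) (nV : V -> K -> Prop) (nW : W -> K -> Prop)
    (f : V -> W) : Prop :=
  forall (x : V) (e : K), 0 < e -> exists2 d : K, 0 < d &
    forall y : V, nV (y - x) d -> nW (f y - f x) e.

Definition is_hpoly (V W : lmodType K) (nV : V -> K -> Prop) (nW : W -> K -> Prop)
    (j : nat) (f : V -> W) : Prop :=
  (exists A : ('I_j -> V) -> W, multilinear A /\ forall x : V, f x = A (fun _ => x))
  /\ norm_continuous nV nW f.

Definition is_spoly (V : lmodType K) (nV : V -> K -> Prop) (j : nat) (q : V -> K^o) : Prop :=
  is_hpoly nV scal_norm_le j q.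

(* The weak* topology of P(^j V) = ((symmetric projective tensor        *)
(* product of V, completed))^*. An element of the completed j-fold      *)
(* symmetric projective tensor product is sum_n lam_n x_n (x) ... (x) x_n *)
(* with sum_n |lam_n| ||x_n||^j < oo, and it acts on q \in P(^j V) by  *)
(* q_L(sum_n lam_n x_n^{(x)j}) = sum_n lam_n q(x_n).                     *)

Definition tensor_admissible (V : lmodType K) (nV : V -> K -> Prop) (j : nat)
    (lam : nat -> K) (xs : nat -> V) : Prop :=
  exists c : nat -> K, (forall n, nV (xs n) (c n)) /\
    exists B : K, forall N : nat, \sum_(n < N) `|lam n| * c n ^+ j <= B.

Definition tensor_eval (V : lmodType K) (lam : nat -> K) (xs : nat -> V) (q : V -> K^o) : K :=
  limn (series (fun n => lam n * q (xs n))).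

(* T : P(^j V) -> P(^i W) is weak*-weak* continuous: continuity (at every
   point q0 of P(^j V)) for the initial topologies generated by the
   functionals tensor_eval, i.e. for each sub-basic neighbourhood of T q0
   there is a basic neighbourhood of q0 mapped into it. *)
Definition wstar_wstar_continuous (V W : lmodType K) (nV : V -> K -> Prop)
    (nW : W -> K -> Prop) (j i : nat) (T : (V -> K^o) -> (W -> K^o)) : Prop :=
  forall q0 : V -> K^o, is_spoly nV j q0 ->
  forall (lam : nat -> K) (ys : nat -> W), tensor_admissible nW i lam ys ->
  forall e : K, 0 < e ->
  exists (r : nat) (lams : 'I_r -> nat -> K) (xss : 'I_r -> nat -> V),
    (forall l, tensor_admissible nV j (lams l) (xss l)) /\
    exists2 d : K, 0 < d &
      forall q : V -> K^o, is_spoly nV j q ->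
        (forall l, `|tensor_eval (lams l) (xss l) q - tensor_eval (lams l) (xss l) q0| < d) ->
        `|tensor_eval lam ys (T q) - tensor_eval lam ys (T q0)| < e.

Definition bounded_linear_op (V W : lmodType K) (nV : V -> K -> Prop)
    (nW : W -> K -> Prop) (j i : nat) (T : (V -> K^o) -> (W -> K^o)) : Prop :=
  (forall q, is_spoly nV j q -> is_spoly nW i (T q)) /\
  (forall (a : K) q1 q2, is_spoly nV j q1 -> is_spoly nV j q2 ->
     T (a *: q1 + q2) = a *: T q1 + T q2) /\
  (exists C : K, forall q, is_spoly nV j q -> forall c : K,
     (forall x, nV x 1 -> `|q x| <= c) -> forall y, nW y 1 -> `|T q y| <= C * c).

End Generic.

From Pilot Require Import Defs.
From HB Require Import structures.
From mathcomp Require Import all_boot all_order all_algebra.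
From mathcomp Require Import all_classical all_reals all_analysis.
From mathcomp Require Import complex.
From mathcomp Require Import ring.
Import Order.TTheory GRing.Theory Num.Theory numFieldNormedType.Exports.
Set Implicit Arguments. Unset Strict Implicit. Unset Printing Implicit Defensive.
Local Open Scope ring_scope.
Local Open Scope classical_set_scope.

(* A coordinate of the surjection R onto l_1, rescaled, is a scalar polynomial
   g in P(^mk E) that is bounded on the unit ball and takes the value 1 at some
   x0.  The rank-one operator T q = (q(e_0) + q(e_1)) g is bounded, and it is
   weak*-weak*-continuous because q |-> q(e_i) is evaluation at the tensor
   e_i (x) ... (x) e_i.  If T q = q o P for the monomials y_0^k, y_1^k and
   y_1 y_0^(k-1), evaluating at x0 gives P(x0)_0^k = P(x0)_1^k = 1, while
   y_1 y_0^(k-1) vanishes at e_0 and e_1 (as k > 1), forcing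
   P(x0)_1 P(x0)_0^(k-1) = 0. *)

Section TensorEval.
Variable K : numFieldType.

Lemma exists_pos_le2 (a b : K) : 0 < a -> 0 < b -> exists2 d, 0 < d & d <= a /\ d <= b.
Proof.
move=> a0 b0; have ab : (a >=< b)%O := real_comparable (gtr0_real a0) (gtr0_real b0).
exists (Order.min a b); first by rewrite comparable_lt_min // a0 b0.
by split; rewrite comparable_ge_min // lexx ?orbT.
Qed.

Lemma limnMl (c : K) (u : nat -> K^o) : limn (fun n => c * u n) = c * limn u.
Proof.
have [->|c0] := eqVneq c 0.
  rewrite mul0r; under eq_fun do rewrite mul0r. exact: lim_cst.
have [cu|ncu] := pselect (cvgn u); first by apply: cvg_lim => //; exact: cvgMl_tmp.
have ncu' : ~ cvgn (fun n => c * u n).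
  by move: ncu; apply: contra_not; rewrite -(is_cvgMlE_tmp (F := \oo) u c0).
by rewrite (dvgP ncu) (dvgP ncu') mulr0.
Qed.

Lemma tensor_eval_scale (V : lmodType K) (lam : nat -> K) (xs : nat -> V)
    (c : K) (q : V -> K^o) :
  tensor_eval lam xs (fun x => c * q x) = c * tensor_eval lam xs q.
Proof.
rewrite /tensor_eval -limnMl.
suff -> : series (fun n => lam n * (c * q (xs n))) =
          (fun N => c * series (fun n => lam n * q (xs n)) N) by [].
apply/funext => N; rewrite /series /= mulr_sumr.
by apply: eq_bigr => i _; rewrite mulrCA.
Qed.

Definition delta_seq (i : nat) : nat -> K^o := fun n => (n == i)%:R.

Lemma tensor_eval_point (V : lmodType K) (x : V) (q : V -> K^o) :
  tensor_eval (delta_seq 0) (fun _ => x) q = q x.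
Proof.
apply: norm_lim_near_cst; exists 1%N => // N /= N_gt0.
rewrite /series /=; case: N N_gt0 => // N _.
rewrite big_nat_recl //= /delta_seq mul1r big1_seq ?addr0 // => i _.
by rewrite mul0r.
Qed.

Lemma l1_le_delta (i : nat) : l1_le (delta_seq i) 1.
Proof.
move=> N; rewrite (eq_bigr (fun n : 'I_N => if n == i :> nat then 1 else 0)).
  by rewrite -big_mkcond (big_ord1_eq _ (fun=> 1)); case: ifP.
by move=> n _; rewrite /delta_seq; case: eqP; rewrite ?normr1 ?normr0.
Qed.

Lemma tensor_admissible_point (V : lmodType K) (nV : V -> K -> Prop) (j : nat)
    (x : V) (c : K) :
  0 <= c -> nV x c -> tensor_admissible nV j (delta_seq 0) (fun _ => x).
Proof.
move=> c0 xc; exists (fun _ => c); split => //; exists (c ^+ j) => N.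
rewrite -mulr_suml -[leRHS]mul1r ler_wpM2r ?exprn_ge0 //.
exact: l1_le_delta.
Qed.

End TensorEval.

Section NormContinuity.
Variables (K : numFieldType) (V : lmodType K) (nV : V -> K -> Prop).

Definition upward_closed : Prop := forall v c c', c <= c' -> nV v c -> nV v c'.

Lemma norm_continuous_cst (c : K) :
  Defs.norm_continuous nV (@scal_norm_le K) (fun=> c : K^o).
Proof. by move=> x e e0; exists 1 => // y _; rewrite /scal_norm_le subrr normr0 ltW. Qed.

Hypothesis nV_up : upward_closed.

Lemma norm_continuousM (f g : V -> K^o) :
  Defs.norm_continuous nV (@scal_norm_le K) f -> Defs.norm_continuous nV (@scal_norm_le K) g ->
  Defs.norm_continuous nV (@scal_norm_le K) (fun x => f x * g x).
Proof.
move=> cf cg x e e0.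
set Fx := `|f x| + 1; set Gx := `|g x| + 1.
have Fx0 : 0 < Fx by rewrite ltr_pwDr.
have Gx0 : 0 < Gx by rewrite ltr_pwDr.
have [df df0 hf] := cf x (e / (2 * Gx)) (divr_gt0 e0 (mulr_gt0 (ltr0Sn K 1) Gx0)).
have [eg eg0 [eg1 egF]] := exists_pos_le2 ltr01 (divr_gt0 e0 (mulr_gt0 (ltr0Sn K 1) Fx0)).
have [dg dg0 hg] := cg x eg eg0.
have [d d0 [ddf ddg]] := exists_pos_le2 df0 dg0.
exists d => // y yx; rewrite /scal_norm_le.
have {hf}hf : `|f y - f x| <= e / (2 * Gx) by apply/hf/(nV_up ddf).
have {hg}hg : `|g y - g x| <= eg by apply/hg/(nV_up ddg).
have gy_le : `|g y| <= Gx.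
  rewrite -[g y](subrK (g x)) (le_trans (ler_normD _ _)) // addrC lerD2l.
  exact: le_trans hg eg1.
have -> : f y * g y - f x * g x = (f y - f x) * g y + f x * (g y - g x) by ring.
rewrite (le_trans (ler_normD _ _)) // !normrM.
have -> : e = e / (2 * Gx) * Gx + Fx * (e / (2 * Fx)) by field; rewrite !gt_eqF.
apply: lerD; apply: ler_pM => //; first by rewrite lerDl.
exact: le_trans hg egF.
Qed.

Lemma norm_continuous_prod (n : nat) (F : 'I_n -> V -> K^o) :
  (forall i, Defs.norm_continuous nV (@scal_norm_le K) (F i)) ->
  Defs.norm_continuous nV (@scal_norm_le K) (fun x => \prod_(i < n) F i x : K^o).
Proof.
elim: n F => [|n IHn] F cF.
  by under eq_fun do rewrite big_ord0; exact: norm_continuous_cst.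
under eq_fun do rewrite big_ord_recr /=.
by apply: norm_continuousM => //; apply: IHn.
Qed.

End NormContinuity.

Section L1.
Variable K : numFieldType.

Lemma l1_norm_le_upward : upward_closed (@l1_norm_le K).
Proof. by move=> v c c' cc' vc N; apply: le_trans (vc N) cc'. Qed.

Lemma l1_le_coord (u : nat -> K^o) (c : K) (j : nat) : l1_le u c -> `|u j| <= c.
Proof.
move=> /(_ j.+1); apply: le_trans; rewrite big_ord_recr /= lerDr.
by apply: sumr_ge0 => i _.
Qed.

Lemma l1_coord_continuous (j : nat) :
  Defs.norm_continuous (@l1_norm_le K) (@scal_norm_le K) (fun y : l1 K => l1val y j).
Proof. by move=> x e e0; exists e => // y; apply: l1_le_coord. Qed.

Lemma delta_seq_in (i : nat) : delta_seq K i \in @l1_pred K.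
Proof. by apply/asboolP; exists 1; apply: l1_le_delta. Qed.

Definition l1_unit (i : nat) : l1 K := L1 (delta_seq_in i).

Lemma l1_norm_le_unit (i : nat) : l1_norm_le (l1_unit i) 1.
Proof. exact: l1_le_delta. Qed.

Definition l1_monomial (k : nat) (f : 'I_k -> nat) (y : l1 K) : K^o :=
  \prod_(i < k) l1val y (f i).

Lemma l1_monomial_spoly (k : nat) (f : 'I_k -> nat) :
  is_spoly (@l1_norm_le K) k (l1_monomial f).
Proof.
split; last first.
  apply: norm_continuous_prod; first exact: l1_norm_le_upward.
  by move=> i; exact: l1_coord_continuous.
exists (fun ys : 'I_k -> l1 K => \prod_(i < k) l1val (ys i) (f i) : K^o); split => // ys j a u v.
rewrite /update !(bigD1 j (P := predT)) //= !eqxx.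
have other w : \prod_(i < k | i != j) l1val (if i == j then w else ys i) (f i) =
               \prod_(i < k | i != j) l1val (ys i) (f i).
  by apply: eq_bigr => i /negbTE ->.
rewrite !other /GRing.scale /=.
have -> : (a *: l1val u + l1val v) (f j) = a * l1val u (f j) + l1val v (f j) by [].
by rewrite mulrDl mulrA.
Qed.

Lemma l1_monomial_cst (k j : nat) (y : l1 K) :
  l1_monomial (fun _ : 'I_k => j) y = l1val y j ^+ k.
Proof. by rewrite /l1_monomial prodr_const card_ord. Qed.

Lemma l1_monomial_unit_eq0 (k : nat) (f : 'I_k -> nat) (i : nat) (j : 'I_k) :
  f j != i -> l1_monomial f (l1_unit i) = 0.
Proof. by move=> fj; apply/eqP/prodf_eq0; exists j => //=; rewrite /delta_seq (negbTE fj). Qed.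

End L1.

Section NormedDomain.
Variables (K : numFieldType) (E : normedModType K).

Lemma norm_le_upward : upward_closed (@norm_le K E).
Proof. by move=> v c c' cc' vc; apply: le_trans vc cc'. Qed.

Lemma hpoly_l1_coord (nE : E -> K -> Prop) (n j : nat) (Rp : E -> l1 K) :
  is_hpoly nE (@l1_norm_le K) n Rp -> is_spoly nE n (fun x => l1val (Rp x) j).
Proof.
move=> [[A [A_ml A_diag]] Rp_cont]; split.
  exists (fun xs => l1val (A xs) j : K^o); split; last by move=> x; rewrite A_diag.
  by move=> xs i a u v; rewrite A_ml.
move=> x e e0; have [d d0 hd] := Rp_cont x e e0.
by exists d => // y /hd Ryx; exact: (l1_le_coord j Ryx).
Qed.

Lemma update_scale (n : nat) (xs : 'I_n -> E) (i : 'I_n) (d : K) (w : E) :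
  (fun l => d *: update xs i w l) = update (fun l => d *: xs l) i (d *: w).
Proof. by apply/funext => l; rewrite /update; case: (l == i). Qed.

Lemma spoly_scale (n : nat) (d : K) (q : E -> K^o) :
  0 < d -> is_spoly (@norm_le K E) n q -> is_spoly (@norm_le K E) n (fun x => q (d *: x)).
Proof.
move=> d0 [[A [A_ml A_diag]] q_cont]; split.
  exists (fun xs => A (fun l => d *: xs l)); split; last by move=> x; rewrite A_diag.
  move=> xs i a u v; rewrite !update_scale scalerDr scalerA mulrC -scalerA.
  exact: A_ml.
move=> x e e0; have [r r0 hr] := q_cont (d *: x) e e0.
exists (r / d) => [|y yx]; first by rewrite divr_gt0.
apply: hr; rewrite /norm_le -scalerBr normrZ gtr0_norm // mulrC -ler_pdivlMr //.
Qed.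

Lemma spoly_bounded_near0 (n : nat) (q : E -> K^o) :
  is_spoly (@norm_le K E) n q ->
  exists2 d, 0 < d & exists M, forall x, `|x| <= d -> `|q x| <= M.
Proof.
move=> [_ q_cont]; have [d d0 hd] := q_cont 0 1 ltr01.
exists d => //; exists (1 + `|q 0|) => x xd.
rewrite -[q x](subrK (q 0)) (le_trans (ler_normD _ _)) // lerD2r.
by apply: hd; rewrite /norm_le subr0.
Qed.

Lemma surj_l1_hpoly_normalized (n : nat) (Rp : E -> l1 K) :
  is_hpoly (@norm_le K E) (@l1_norm_le K) n Rp -> (forall y, exists x, Rp x = y) ->
  exists g : E -> K^o, is_spoly (@norm_le K E) n g /\
    (exists M, forall x, norm_le x 1 -> `|g x| <= M) /\ exists x0, g x0 = 1.
Proof.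
move=> Rp_poly Rp_surj.
have q_poly := hpoly_l1_coord 0 Rp_poly.
have [d d0 [M hM]] := spoly_bounded_near0 q_poly.
exists (fun x => l1val (Rp (d *: x)) 0); split; first exact: (spoly_scale d0 q_poly).
split.
  exists M => x x1; apply: hM.
  by rewrite normrZ gtr0_norm // -[leRHS]mulr1 ler_wpM2l // ltW.
have [x1 Rx1] := Rp_surj (l1_unit K 0).
by exists (d^-1 *: x1); rewrite scalerA divff ?gt_eqF // scale1r Rx1.
Qed.

End NormedDomain.

Section RankOneOperator.
Variables (K : numFieldType) (E : normedModType K) (n : nat) (g : E -> K^o).

Definition eval01 (q : l1 K -> K^o) : K := q (l1_unit K 0) + q (l1_unit K 1).

Definition rank_one_op (q : l1 K -> K^o) (x : E) : K^o := eval01 q * g x.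

Lemma rank_one_op_bounded_linear (k : nat) (M : K) :
  is_spoly (@norm_le K E) n g -> (forall x, norm_le x 1 -> `|g x| <= M) ->
  bounded_linear_op (@l1_norm_le K) (@norm_le K E) k n rank_one_op.
Proof.
move=> [[A [A_ml A_diag]] g_cont] g_bd.
have M0 : 0 <= M by apply: le_trans (normr_ge0 _) (g_bd 0 _); rewrite /norm_le normr0.
split; [|split].
- move=> q _; split.
    exists (fun xs => eval01 q * A xs : K^o); split.
      by move=> xs i a u v; rewrite A_ml /GRing.scale /=; ring.
    by move=> x; rewrite /rank_one_op A_diag.
  exact: norm_continuousM (norm_le_upward (E := E)) _ _ (norm_continuous_cst _ _) g_cont.
- move=> a q1 q2 _ _; apply/funext => x; rewrite /rank_one_op /eval01.
  by rewrite !fctE /GRing.scale /=; ring.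
- exists (2 * M) => q _ c qc y y1; rewrite normrM.
  have -> : 2 * M * c = (c + c) * M by ring.
  apply: ler_pM => //; last exact: g_bd.
  apply: le_trans (ler_normD _ _) _.
  exact: lerD (qc _ (l1_norm_le_unit K 0)) (qc _ (l1_norm_le_unit K 1)).
Qed.

Lemma rank_one_op_wstar_continuous (k : nat) :
  wstar_wstar_continuous (@l1_norm_le K) (@norm_le K E) k n rank_one_op.
Proof.
move=> q0 _ lam ys _ e e0.
exists 2%N, (fun _ => delta_seq K 0), (fun l _ => l1_unit K l); split.
  by move=> l; apply: tensor_admissible_point ler01 (l1_norm_le_unit K l).
set S := tensor_eval lam ys g.
have S1 : 0 < `|S| + 1 by rewrite ltr_pwDr.
exists (e / (2 * (`|S| + 1))) => [|q _ qq0]; first by rewrite divr_gt0 // mulr_gt0.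
have := qq0 ord0; have := qq0 ord_max; rewrite !tensor_eval_point => close1 close0.
rewrite /rank_one_op !tensor_eval_scale -/S -mulrBl normrM.
have eval01_lt : `|eval01 q - eval01 q0| < 2 * (e / (2 * (`|S| + 1))).
  rewrite /eval01 opprD addrACA.
  by rewrite (le_lt_trans (ler_normD _ _)) // mulr2n mulrDl mul1r ltrD.
have e_eq : 2 * (e / (2 * (`|S| + 1))) * (`|S| + 1) = e by field; rewrite !gt_eqF.
rewrite -(ltr_pM2r S1) e_eq in eval01_lt; apply: le_lt_trans eval01_lt.
by rewrite ler_wpM2l // lerDl.
Qed.

Lemma rank_one_op_not_composition (k : nat) (x0 : E) (P : E -> l1 K) :
  (1 < k)%N -> g x0 = 1 ->
  exists2 q : l1 K -> K^o, is_spoly (@l1_norm_le K) k q & rank_one_op q <> (fun x => q (P x)).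
Proof.
move=> k_gt1 gx0; apply: contrapT => no_q.
have comp (f : 'I_k -> nat) : rank_one_op (l1_monomial f) x0 = l1_monomial f (P x0).
  apply: contrapT => ne; apply: no_q; exists (l1_monomial f); first exact: l1_monomial_spoly.
  by move=> /(congr1 (fun F => F x0)).
have k_gt0 : (0 < k)%N by apply: ltnW.
have k_neq0 : k != 0%N by rewrite -lt0n.
have Px0_pow (j : nat) : (j <= 1)%N -> l1val (P x0) j ^+ k = 1.
  move=> j_le1; rewrite -l1_monomial_cst -comp /rank_one_op /eval01 gx0 mulr1.
  rewrite !l1_monomial_cst /= /delta_seq.
  by case: j j_le1 => [|[|]] //= _; rewrite expr1n expr0n (negbTE k_neq0) ?addr0 ?add0r.
(* f3 encodes the monomial y_1 y_0^(k-1). *)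
pose f3 (i : 'I_k) : nat := (val i == 0%N).
have : l1_monomial f3 (P x0) != 0.
  apply/prodf_neq0 => i _; apply/eqP => Px0_f3i.
  move: (Px0_pow _ (leq_b1 (val i == 0%N))); rewrite Px0_f3i expr0n (negbTE k_neq0).
  by move/eqP; rewrite eq_sym oner_eq0.
rewrite -comp /rank_one_op /eval01.
rewrite (@l1_monomial_unit_eq0 K _ f3 0 (Ordinal k_gt0)) //.
by rewrite (@l1_monomial_unit_eq0 K _ f3 1 (Ordinal k_gt1)) // addr0 mul0r eqxx.
Qed.

End RankOneOperator.

Theorem mainTheorem11 (R : realType) (b : bool)
    (E : completeNormedModType (scalarK R b)) (m k : nat) :
  (1 < k)%N ->
  (exists Rp : E -> l1 (scalarK R b),
      is_hpoly (@norm_le _ E) (@l1_norm_le _) (m * k) Rp /\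
      (forall y : l1 (scalarK R b), exists x : E, Rp x = y)) ->
  exists T : (l1 (scalarK R b) -> (scalarK R b)^o) -> (E -> (scalarK R b)^o),
    bounded_linear_op (@l1_norm_le _) (@norm_le _ E) k (m * k) T /\
    wstar_wstar_continuous (@l1_norm_le _) (@norm_le _ E) k (m * k) T /\
    (forall P : E -> l1 (scalarK R b),
       is_hpoly (@norm_le _ E) (@l1_norm_le _) m P ->
       exists2 q : l1 (scalarK R b) -> (scalarK R b)^o,
         is_spoly (@l1_norm_le _) k q & T q <> (fun x => q (P x))).
Proof.
move=> k_gt1 [Rp [Rp_poly Rp_surj]].
have [g [g_poly [[M g_bd] [x0 gx0]]]] := surj_l1_hpoly_normalized Rp_poly Rp_surj.
exists (rank_one_op g); split; first exact: rank_one_op_bounded_linear g_poly g_bd.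
split; first exact: rank_one_op_wstar_continuous.
by move=> P _; apply: rank_one_op_not_composition k_gt1 gx0.
Qed.
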